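(* Let $X$ be a set and $\{d_r\colon X\times X\to\mathbb{R}_{\ge0}\cup\{\infty\}\}_{r>0}$ a family satisfying the weaker $\{d_r\}$-axioms (see context). Then the $D$-topology of the diffeology on $X$ induced by $\{d_r\}_{r>0}$ is finer than the topology on $X$ induced by $\{d_r\}_{r>0}$, namely the topology in which $W\subset X$ is open iff for every $x\in W$ there are $r,\varepsilon>0$ with $\{y\in X\mid d_r(x,y)<\varepsilon\}\subset W$.
   Context: The weaker $\{d_r\}$-axioms, required for all $x,y,z\in X$: (Self-distance) $d_r(x,x)=0$ for all $r>0$. (Upper semi-continuity) if $r_1\le r_2$ then $d_{r_1}(x,y)\le d_{r_2}(x,y)$; and if $d_r(x,y)<\varepsilon$ there is $\delta>0$ with $d_{r+\delta}(x,y)<\varepsilon$. (Weaker triangle inequality) for $r_1,r_2,r_3>0$, if $d_{r_1+r_2+r_3}(x,y)<r_3$ and $d_{r_1+r_2+r_3}(y,z)<r_2$, then $d_{r_1}(x,z)\le d_{r_1+r_2+r_3}(x,y)+d_{r_1+r_2+r_3}(y,z)$. The diffeology induced by $\{d_r\}$ consists of the maps $p\colon U_p\to X$ ($U_p$ open in some $\mathbb{R}^n$) such that for each $t_0\in U_p$ there is $\delta>0$ with (1) $t\mapsto d_r(p(t_0),p(t))$ real-valued and continuous on the open ball $B_\delta(t_0)$ for every $r>0$, and (2) for each $t_1\in B_\delta(t_0)\setminus p^{-1}(p(t_0))$ and each $r>0$, $t\mapsto d_r(p(t_1),p(t))$ is smooth at $t_0$ (this set is a diffeology). The $D$-topology of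 a diffeology is the largest topology on $X$ for which all plots are continuous, i.e. $W\subset X$ is $D$-open iff $p^{-1}(W)$ is open for every plot $p$. *)

From HB Require Import structures.
From mathcomp Require Import all_boot all_order all_algebra.
From mathcomp Require Import all_classical all_reals all_analysis.
Set Implicit Arguments. Unset Strict Implicit. Unset Printing Implicit Defensive.
Import Order.TTheory GRing.Theory Num.Theory.
Import numFieldNormedType.Exports.
Local Open Scope classical_set_scope.
Local Open Scope ring_scope.

(* A family {d_r}_{r>0} is modelled as d : R -> X -> X -> \bar R; only its
   values at r > 0 matter. *)

Definition dr_nonneg (R : realType) (X : Type) (d : R -> X -> X -> \bar R) :=
  forall r x y, 0 < r -> (0 <= d r x y)%E.

Definition weaker_dr_axioms (R : realType) (X : Type) (d : R -> X -> X -> \bar R) :=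
  dr_nonneg d /\
  (forall r x, 0 < r -> d r x x = 0%E) /\
  (* upper semi-continuity, part 1: monotonicity in r *)
  (forall r1 r2 x y, 0 < r1 -> r1 <= r2 -> (d r1 x y <= d r2 x y)%E) /\
  (forall r (eps : R) x y, 0 < r -> (d r x y < eps%:E)%E ->
     exists delta : R, 0 < delta /\ (d (r + delta)%R x y < eps%:E)%E) /\
  (forall r1 r2 r3 x y z, 0 < r1 -> 0 < r2 -> 0 < r3 ->
     (d (r1 + r2 + r3)%R x y < r3%:E)%E -> (d (r1 + r2 + r3)%R y z < r2%:E)%E ->
     (d r1 x z <= d (r1 + r2 + r3)%R x y + d (r1 + r2 + r3)%R y z)%E).

Definition eball (R : realType) (n : nat) (t0 : 'rV[R]_n) (delta : R) : set 'rV[R]_n :=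
  [set t | \sum_(i < n) (t ord0 i - t0 ord0 i) ^+ 2 < delta ^+ 2].

Definition evec (R : realType) (n : nat) (i : 'I_n) : 'rV[R]_n := delta_mx ord0 i.

Fixpoint pder (R : realType) (n : nat) (l : seq 'I_n) (f : 'rV[R]_n -> R) : 'rV[R]_n -> R :=
  match l with
  | [::] => f
  | i :: l' => fun t => derive (pder l' f) t (evec R i)
  end.

Definition smooth_on (R : realType) (n : nat) (V : set 'rV[R]_n) (f : 'rV[R]_n -> R) :=
  (forall (l : seq 'I_n) (i : 'I_n) t, V t -> derivable (pder l f) t (evec R i)) /\
  (forall (l : seq 'I_n) t, V t -> {for t, continuous (pder l f)}).

Definition smooth_at (R : realType) (n : nat) (U : set 'rV[R]_n)
    (f : 'rV[R]_n -> \bar R) (t0 : 'rV[R]_n) :=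
  exists V : set 'rV[R]_n, [/\ open V, V t0, V `<=` U,
    (forall t, V t -> f t \is a fin_num) & smooth_on V (fine \o f)].

Definition dr_plot (R : realType) (X : Type) (d : R -> X -> X -> \bar R)
    (n : nat) (U : set 'rV[R]_n) (p : 'rV[R]_n -> X) :=
  open U /\
  forall t0, U t0 -> exists delta : R, 0 < delta /\ eball t0 delta `<=` U /\
    (forall r, 0 < r ->
       (forall t, eball t0 delta t -> d r (p t0) (p t) \is a fin_num) /\
       {within eball t0 delta, continuous (fun t => fine (d r (p t0) (p t)))}) /\
    (forall t1, eball t0 delta t1 -> p t1 <> p t0 ->
       forall r, 0 < r -> smooth_at U (fun t => d r (p t1) (p t)) t0).

Definition D_open (R : realType) (X : Type) (d : R -> X -> X -> \bar R) (W : set X) :=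
  forall (n : nat) (U : set 'rV[R]_n) (p : 'rV[R]_n -> X),
    dr_plot d U p -> open (U `&` p @^-1` W).

Definition dr_open (R : realType) (X : Type) (d : R -> X -> X -> \bar R) (W : set X) :=
  forall x, W x -> exists r eps : R, 0 < r /\ 0 < eps /\
    [set y | (d r x y < eps%:E)%E] `<=` W.

From HB Require Import structures.
From mathcomp Require Import all_boot all_order all_algebra.
From mathcomp Require Import all_classical all_reals all_analysis.
Import Order.TTheory GRing.Theory Num.Theory.
Import numFieldNormedType.Exports.
Local Open Scope classical_set_scope.
Local Open Scope ring_scope.

(* Condition (1) on a plot p makes t |-> d_r(p t0, p t) continuous at t0, where
   it vanishes by the self-distance axiom; hence p pulls every set
   {y | d_r(p t0, y) < eps} back to a neighbourhood of t0.  No other axiom is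
   needed. *)

Section euclidean_ball.
Context {R : realType} {n : nat}.
Implicit Types (x : 'rV[R]_n) (delta : R).

(* Each squared coordinate difference below [delta^2 / (n + 1)] suffices. *)
Lemma nbhs_eball x delta : 0 < delta -> nbhs x (eball x delta).
Proof.
move=> delta_gt0; set c := delta ^+ 2 / n.+1%:R.
have c_gt0 : 0 < c by rewrite divr_gt0 // exprn_gt0.
have coord_near (i : 'I_n) :
    \forall t \near x, ((t : 'rV[R]_n) ord0 i - x ord0 i) ^+ 2 < c.
  have sqrtc_gt0 : 0 < Num.sqrt c by rewrite sqrtr_gt0.
  apply: filterS (cvgr_dist_lt _ _ (@coord_continuous R 1 n ord0 i x) _ sqrtc_gt0).
  by move=> t; rewrite -[_ < c]ltr_sqrt // sqrtr_sqr distrC.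
apply: filterS (filter_forall _ coord_near) => t coord_lt.
apply: (@le_lt_trans _ _ (\sum_(i < n) c)).
  by apply: ler_sum => i _; apply: ltW.
have -> : delta ^+ 2 = c *+ n.+1 by rewrite -mulr_natr divfK // pnatr_eq0.
by rewrite sumr_const card_ord mulrS ltrDr.
Qed.

End euclidean_ball.

Lemma continuous_within_nbhs {T S : topologicalType} {A : set T} {f : T -> S} {x : T} :
  nbhs x A -> {within A, continuous f} -> {for x, continuous f}.
Proof.
move=> Ax /subspace_continuousP /(_ x (nbhs_singleton Ax)).
by rewrite within_interior.
Qed.

Lemma dr_plot_dist_near {R : realType} {X : Type} {d : R -> X -> X -> \bar R}
    {n : nat} {U : set 'rV[R]_n} {p : 'rV[R]_n -> X} {t0 : 'rV[R]_n} {r eps : R} :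
  dr_plot d U p -> U t0 -> 0 < r -> d r (p t0) (p t0) = 0%E -> 0 < eps ->
  \forall t \near t0, (d r (p t0) (p t) < eps%:E)%E.
Proof.
move=> [_ plot_cond] Ut0 r_gt0 dist_self eps_gt0.
have [delta [delta_gt0 [_ [/(_ r r_gt0) [dist_fin dist_cont] _]]]] := plot_cond t0 Ut0.
have nbhs_ball := nbhs_eball t0 delta delta_gt0.
have /cvgr_lt dist_lt := continuous_within_nbhs nbhs_ball dist_cont.
rewrite /= dist_self /= in dist_lt.
apply: filterS (filterI (dist_lt _ eps_gt0) nbhs_ball) => t [dist_lt_eps ball_t].
by rewrite -(fineK (dist_fin t ball_t)) lte_fin.
Qed.

Theorem propositionA2 (R : realType) (X : Type) (d : R -> X -> X -> \bar R) :
  weaker_dr_axioms d ->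
  forall W : set X, dr_open d W -> D_open d W.
Proof.
move=> [_ [dist_self _]] W W_open n U p plot_p.
have U_open : open U := plot_p.1.
rewrite openE => t0 [Ut0 Wpt0].
have [r [eps [r_gt0 [eps_gt0 ball_sub]]]] := W_open _ Wpt0.
have dist_near := dr_plot_dist_near plot_p Ut0 r_gt0 (dist_self _ _ r_gt0) eps_gt0.
have U_near : nbhs t0 U by move: U_open; rewrite openE; apply.
by apply: filterS (filterI dist_near U_near) => t [/ball_sub Wpt Ut].
Qed.
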